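(* Let $F$ be a perfect field of characteristic $\neq 2$ and let $(V,q)$ be a nondegenerate quadratic space over $F$ with $\dim V=n=2m+1$, $m$ odd, of maximal Witt index, with basis $\{e_0,e_1,f_1,\ldots,e_m,f_m\}$ where $q(e_0)\neq0$, $e_0\perp e_i,f_i$, $B(e_i,f_j)=\delta_{ij}$, $B(e_i,e_j)=0=B(f_i,f_j)$. Let $t$ be an element of $T=\{\lambda_0\prod_{i=1}^m(e_i+f_i)(e_i+\lambda_if_i):\lambda_i\in F^*\}\subseteq\Gamma^+(V,q)$. Then there exists $s\in\Gamma^+(V,q)$ such that $sts^{-1}=N(t)t^{-1}$, $N(s)=1$ and $s^2=(-1)^{m(m+1)/2}$.
   Context: $B(x,y)=q(x+y)-q(x)-q(y)$. $C(V,q)=T(V)/\langle x\otimes x-q(x)\cdot1\rangle=C_0\oplus C_1$, $\Gamma(V,q)=\{u\in C(V,q)^\times: uVu^{-1}\subseteq V\}$, $\Gamma^+(V,q)=\Gamma(V,q)\cap C_0(V,q)$. With $\tau$ the anti-involution reversing products of vectors, $N(u)=\tau(u)u$. *)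

From HB Require Import structures.
From mathcomp Require Import all_boot all_order all_algebra.
Set Implicit Arguments. Unset Strict Implicit. Unset Printing Implicit Defensive.
Import Order.TTheory GRing.Theory.
Local Open Scope ring_scope.

Definition perfect_field (F : fieldType) : Prop :=
  forall p : nat, p \in [pchar F] -> forall x : F, exists y : F, y ^+ p = x.

Section Quad.
Variables (F : fieldType) (V : lmodType F).

Definition polar (q : V -> F) (x y : V) : F := q (x + y) - q x - q y.

Definition quadratic_form (q : V -> F) : Prop :=
  (forall (a : F) (x : V), q (a *: x) = a ^+ 2 * q x) /\
  (forall (x y z : V) (a : F), polar q x (a *: y + z) = a * polar q x y + polar q x z).

Definition qnondegenerate (q : V -> F) : Prop :=
  forall x : V, (forall y : V, polar q x y = 0) -> x = 0.

Definition is_clifford_algebra (q : V -> F) (A : unitAlgType F) (iota : {linear V -> A})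
  : Prop :=
  (forall v : V, iota v * iota v = (q v)%:A) /\
  (forall (B : algType F) (g : {linear V -> B}),
      (forall v : V, g v * g v = (q v)%:A) ->
      exists h : {lrmorphism A -> B},
        (forall v, h (iota v) = g v) /\
        (forall h' : {lrmorphism A -> B}, (forall v, h' (iota v) = g v) -> h' =1 h)).

Definition is_reversion (A : unitAlgType F) (iota : {linear V -> A}) (tau : A -> A)
  : Prop :=
  [/\ forall (a : F) (x y : A), tau (a *: x + y) = a *: tau x + tau y,
      tau 1 = 1,
      forall x y : A, tau (x * y) = tau y * tau x
    & forall v : V, tau (iota v) = iota v].

Definition clifford_even (A : unitAlgType F) (iota : {linear V -> A}) (x : A) : Prop :=
  exists (k : nat) (c : 'I_k -> F) (w : 'I_k -> seq V),
    (forall j, ~~ odd (size (w j))) /\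
    x = \sum_(j < k) c j *: \prod_(v <- w j) iota v.

Definition clifford_group (A : unitAlgType F) (iota : {linear V -> A}) (u : A) : Prop :=
  u \is a GRing.unit /\ forall v : V, exists w : V, u * iota v * u^-1 = iota w.

Definition clifford_group_even (A : unitAlgType F) (iota : {linear V -> A}) (u : A)
  : Prop := clifford_group iota u /\ clifford_even iota u.

Definition spin_norm (A : unitAlgType F) (tau : A -> A) (u : A) : A := tau u * u.

End Quad.

From HB Require Import structures.
From mathcomp Require Import all_boot all_order all_algebra ring.

Set Implicit Arguments.
Unset Strict Implicit.
Unset Printing Implicit Defensive.

Import GRing.Theory.
Local Open Scope ring_scope.

(* Take s = e0 w_1 ... w_m with w_j = e_j + b_j f_j, a product of m + 1 pairwise
   orthogonal anisotropic vectors, the b_j chosen with q(e0) b_1 ... b_m = 1.  Then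
   N(s) = q(e0) b_1 ... b_m = 1, and s is even because m + 1 is.  Reversing a product
   of k orthogonal vectors multiplies it by (-1)^(k(k-1)/2), so N(s) = 1 also yields
   s^2 = (-1)^(m(m+1)/2).  Since e_i and f_i are isotropic, the vectors
   e_i + c f_i satisfy the palindromic identity w_a w_b w_c = w_c w_b w_a, so s
   turns the factor w_1 w_l of t into w_l w_1 while every other factor of s
   commutes with it; thus s t = tau(t) s, and tau(t) = N(t) t^-1. *)

Section NoncommutativeProducts.
Variable R : pzRingType.

Lemma prodr_intertwine (I : Type) (r : seq I) (s : R) (P Q : I -> R) :
  (forall i, s * P i = Q i * s) ->
  s * \prod_(i <- r) P i = \prod_(i <- r) Q i * s.
Proof.
move=> sPQ; elim: r => [|i r IHr]; first by rewrite !big_nil mulr1 mul1r.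
by rewrite !big_cons mulrA sPQ -!mulrA IHr.
Qed.

Lemma prodr_rev_comm (I : eqType) (r : seq I) (P : I -> R) :
  (forall i j, i != j -> GRing.comm (P i) (P j)) ->
  \prod_(i <- rev r) P i = \prod_(i <- r) P i.
Proof.
move=> Pcomm; elim: r => [|i r IHr] //.
rewrite rev_cons big_rcons big_cons IHr.
have : GRing.comm (P i) (\prod_(j <- r) P j).
  apply: commr_prod => j _; have [<-|ij] := eqVneq i j; last exact: Pcomm.
  exact: commr_refl.
by move=> ->.
Qed.

Lemma prodr_intertwine_at (I : eqType) (r : seq I) (i : I) (W : I -> R) (x y : R) :
  uniq r -> i \in r ->
  (forall j, j != i -> GRing.comm (W j) x /\ GRing.comm (W j) y) ->
  W i * x = y * W i ->
  \prod_(j <- r) W j * x = y * \prod_(j <- r) W j.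
Proof.
move=> + + Wcomm Wixy; elim: r => [|j r IHr] //= /andP[jr ur].
rewrite inE big_cons => /orP[/eqP ij | ir]; last first.
  have ji : j != i by apply: contraNneq jr => ->.
  by rewrite -mulrA IHr // !mulrA (Wcomm j ji).2.
have : GRing.comm (\prod_(k <- r) W k) x.
  apply/commr_sym; rewrite big_seq; apply: commr_prod => k kr.
  have ki : k != i by apply: contraNneq jr; rewrite ij => <-.
  exact/commr_sym/(Wcomm k ki).1.
by move=> Wx; rewrite -ij -mulrA Wx !mulrA Wixy.
Qed.

End NoncommutativeProducts.

Lemma sqr0_palindrome (R : comPzRingType) (A : algType R) (x y : A) (a b c : R) :
  x * x = 0 -> y * y = 0 ->
  (x + a *: y) * (x + b *: y) * (x + c *: y) =
  (x + c *: y) * (x + b *: y) * (x + a *: y).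
Proof.
move=> xx0 yy0.
have xxl z : x * x * z = 0 by rewrite xx0 mul0r.
have xxr z : z * x * x = 0 by rewrite -mulrA xx0 mulr0.
have yyl z : y * y * z = 0 by rewrite yy0 mul0r.
have yyr z : z * y * y = 0 by rewrite -mulrA yy0 mulr0.
rewrite !(mulrDl, mulrDr) -!scalerAl -!scalerAr -!scalerAl !scalerA.
rewrite !(xxl, xxr, yyl, yyr) !(scaler0, add0r, addr0).
by rewrite mulrC.
Qed.

Section PolarForm.
Variables (F : fieldType) (V : lmodType F) (q : V -> F).
Hypothesis hq : quadratic_form q.

Lemma quad0 : q 0 = 0.
Proof. by rewrite -(scale0r (0 : V)) hq.1 expr2 !mul0r. Qed.

Lemma polarC x y : polar q x y = polar q y x.
Proof. by rewrite /polar [y + x]addrC addrAC. Qed.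

Lemma polar0r x : polar q x 0 = 0.
Proof. by rewrite /polar addr0 quad0 subr0 subrr. Qed.

Lemma polarZr x a y : polar q x (a *: y) = a * polar q x y.
Proof. by have := hq.2 x y 0 a; rewrite addr0 polar0r addr0. Qed.

Lemma polarDr x y z : polar q x (y + z) = polar q x y + polar q x z.
Proof. by have := hq.2 x y z 1; rewrite scale1r mul1r. Qed.

Lemma polarZl x a y : polar q (a *: y) x = a * polar q y x.
Proof. by rewrite polarC polarZr polarC. Qed.

Lemma polarDl x y z : polar q (y + z) x = polar q y x + polar q z x.
Proof. by rewrite polarC polarDr !(polarC x). Qed.

Lemma quadD x y : q (x + y) = q x + q y + polar q x y.
Proof. by rewrite /polar; ring. Qed.

Lemma polar_diag x : polar q x x = q x *+ 2.
Proof. by rewrite /polar -mulr2n -scaler_nat hq.1 -mulr_natl; ring. Qed.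

Lemma quad_eq0_polar_diag x : (2%:R : F) != 0 -> polar q x x = 0 -> q x = 0.
Proof.
move=> two_neq0; rewrite polar_diag -mulr_natr => /eqP.
by rewrite mulf_eq0 (negbTE two_neq0) orbF => /eqP.
Qed.

End PolarForm.

Section CliffordRelations.
Variables (F : fieldType) (V : lmodType F) (q : V -> F).
Variables (A : unitAlgType F) (iota : {linear V -> A}).
Hypothesis iota_sqr : forall v, iota v * iota v = (q v)%:A.

Lemma iota_anticomm x y : iota x * iota y + iota y * iota x = (polar q x y)%:A.
Proof.
have := iota_sqr (x + y); rewrite linearD mulrDl !mulrDr !iota_sqr => qxy.
rewrite /polar !scalerBl -qxy; apply/eqP.
by rewrite eq_sym !subr_eq; apply/eqP; rewrite [RHS]addrC !addrA.
Qed.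

Lemma iota_anticomm_orth x y :
  polar q x y = 0 -> iota x * iota y = - (iota y * iota x).
Proof. by move=> xy0; apply/eqP; rewrite -addr_eq0 iota_anticomm xy0 scale0r. Qed.

Lemma iota_comm_pair w x y : polar q w x = 0 -> polar q w y = 0 ->
  GRing.comm (iota w) (iota x * iota y).
Proof.
move=> wx0 wy0; rewrite /GRing.comm mulrA (iota_anticomm_orth wx0) mulNr.
by rewrite -[in LHS]mulrA (iota_anticomm_orth wy0) mulrN opprK mulrA.
Qed.

Lemma iota_unit a : q a != 0 -> iota a \is a GRing.unit.
Proof.
move=> qa0; have : iota a * iota a \is a GRing.unit.
  by rewrite iota_sqr scaler_unit ?unitr1 ?unitfE.
by rewrite unitrM_comm // => /andP[].
Qed.

Lemma iota_inv a : q a != 0 -> (iota a)^-1 = (q a)^-1 *: iota a.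
Proof.
move=> qa0; rewrite -[RHS]mul1r -(mulVr (iota_unit qa0)) -mulrA -scalerAr.
by rewrite iota_sqr scalerA mulVf // scale1r mulr1.
Qed.

Lemma iota_conj a x : q a != 0 ->
  iota a * iota x * (iota a)^-1 = iota ((q a)^-1 * polar q a x *: a - x).
Proof.
move=> qa0; rewrite iota_inv // -scalerAr.
have -> : iota a * iota x = (polar q a x)%:A - iota x * iota a.
  by rewrite -iota_anticomm addrK.
rewrite mulrBl -mulrA iota_sqr mulr_algl mulr_algr scalerBr !scalerA mulVf //.
by rewrite scale1r linearB linearZ mulrC.
Qed.

Lemma clifford_group_prod_iota (ws : seq V) : all (fun v => q v != 0) ws ->
  clifford_group iota (\prod_(v <- ws) iota v).
Proof.
elim: ws => [|a ws IHws] /=.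
  by rewrite big_nil; split=> [|x]; [exact: unitr1 | exists x; rewrite invr1 mulr1 mul1r].
move=> /andP[qa0 /IHws[wsU wsconj]]; rewrite big_cons.
split=> [|x]; first by rewrite unitrMr // iota_unit.
have [y wsxy] := wsconj x; exists ((q a)^-1 * polar q a y *: a - y).
rewrite invrM ?iota_unit // !mulrA -(mulrA (iota a) _ (iota x)) -(mulrA (iota a)).
by rewrite wsxy iota_conj.
Qed.

Lemma clifford_even_prod_iota (ws : seq V) : ~~ odd (size ws) ->
  clifford_even iota (\prod_(v <- ws) iota v).
Proof. by move=> ws_even; exists 1%N, (fun=> 1), (fun=> ws); rewrite big_ord1 scale1r. Qed.

End CliffordRelations.

Section Reversion.
Variables (F : fieldType) (V : lmodType F) (q : V -> F).
Variables (A : unitAlgType F) (iota : {linear V -> A}).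
Hypothesis iota_sqr : forall v, iota v * iota v = (q v)%:A.
Variable tau : A -> A.
Hypothesis tau_rev : is_reversion iota tau.

Lemma reversion0 : tau 0 = 0.
Proof.
have [tau_lin _ _ _] := tau_rev; have := tau_lin 1 0 0.
by rewrite !scale1r addr0 -{1}[tau 0]addr0 => /addrI.
Qed.

Lemma reversionZ a x : tau (a *: x) = a *: tau x.
Proof.
by have [tau_lin _ _ _] := tau_rev; rewrite -[a *: x]addr0 tau_lin reversion0 addr0.
Qed.

Lemma reversionM x y : tau (x * y) = tau y * tau x.
Proof. by case: tau_rev. Qed.

Lemma reversion1 : tau 1 = 1.
Proof. by case: tau_rev. Qed.

Lemma reversion_iota v : tau (iota v) = iota v.
Proof. by case: tau_rev. Qed.

Lemma reversion_prod (I : Type) (r : seq I) (X : I -> A) :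
  tau (\prod_(i <- r) X i) = \prod_(i <- rev r) tau (X i).
Proof.
elim: r => [|i r IHr]; first by rewrite !big_nil reversion1.
by rewrite big_cons reversionM IHr rev_cons big_rcons.
Qed.

Lemma spin_norm_prod_iota (ws : seq V) :
  spin_norm tau (\prod_(v <- ws) iota v) = (\prod_(v <- ws) q v)%:A.
Proof.
rewrite /spin_norm; elim: ws => [|a ws IHws].
  by rewrite !big_nil reversion1 mulr1 scale1r.
rewrite !big_cons reversionM reversion_iota -mulrA (mulrA (iota a)) iota_sqr.
by rewrite mulr_algl -scalerAr IHws scalerA.
Qed.

Lemma prod_iota_mul_orth (a : V) (ws : seq V) :
  all (fun v => polar q a v == 0) ws ->
  \prod_(v <- ws) iota v * iota a = (-1) ^+ size ws *: (iota a * \prod_(v <- ws) iota v).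
Proof.
elim: ws => [|b ws IHws]; first by rewrite big_nil expr0 scale1r mulr1 mul1r.
move=> /= /andP[/eqP ab0 /IHws{}IHws].
rewrite big_cons -mulrA IHws -scalerAr [in LHS]mulrA.
rewrite (iota_anticomm_orth iota_sqr (x := b) (y := a)); last by rewrite polarC.
by rewrite mulNr -mulrA scalerN -scaleNr exprS mulN1r.
Qed.

Lemma reversion_prod_iota_orth (ws : seq V) :
  pairwise (fun x y => polar q x y == 0) ws ->
  tau (\prod_(v <- ws) iota v) = (-1) ^+ 'C(size ws, 2) *: \prod_(v <- ws) iota v.
Proof.
elim: ws => [|a ws IHws].
  by rewrite big_nil reversion1 bin0n expr0 scale1r.
rewrite pairwise_cons => /andP[a_orth /IHws{}IHws].
rewrite big_cons reversionM reversion_iota IHws -scalerAl prod_iota_mul_orth //.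
by rewrite scalerA /= binS bin1 exprD.
Qed.

Lemma sqr_prod_iota_orth (ws : seq V) :
  pairwise (fun x y => polar q x y == 0) ws -> \prod_(v <- ws) q v = 1 ->
  (\prod_(v <- ws) iota v) ^+ 2 = (-1) ^+ 'C(size ws, 2).
Proof.
move=> ws_orth ws_norm; set s := \prod_(v <- ws) iota v.
have := spin_norm_prod_iota ws; rewrite ws_norm scale1r /spin_norm.
rewrite reversion_prod_iota_orth // -scalerAl -/s => sgn_s2.
rewrite -(rmorph_sign (in_alg A)) /= -sgn_s2 scalerA -expr2 sqrr_sign scale1r.
by rewrite expr2.
Qed.

End Reversion.

Section HyperbolicPairs.
Variables (F : fieldType) (V : lmodType F) (q : V -> F).
Hypothesis hq : quadratic_form q.
Hypothesis two_neq0 : (2%:R : F) != 0.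
Variables (A : unitAlgType F) (iota : {linear V -> A}).
Hypothesis iota_sqr : forall v, iota v * iota v = (q v)%:A.
Variable tau : A -> A.
Hypothesis tau_rev : is_reversion iota tau.
Variables (m : nat) (e0 : V) (e f : 'I_m -> V).
Hypotheses (he0e : forall i, polar q e0 (e i) = 0) (he0f : forall i, polar q e0 (f i) = 0).
Hypothesis hef : forall i j, polar q (e i) (f j) = (i == j)%:R.
Hypothesis hee : forall i j, polar q (e i) (e j) = 0.
Hypothesis hff : forall i j, polar q (f i) (f j) = 0.

Definition hvec (i : 'I_m) (c : F) : V := e i + c *: f i.

Let quad_e i : q (e i) = 0. Proof. exact: quad_eq0_polar_diag hq _ two_neq0 (hee i i). Qed.
Let quad_f i : q (f i) = 0. Proof. exact: quad_eq0_polar_diag hq _ two_neq0 (hff i i). Qed.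

Lemma quad_hvec i c : q (hvec i c) = c.
Proof. by rewrite quadD polarZr // hef eqxx mulr1 hq.1 quad_e quad_f mulr0 !add0r. Qed.

Lemma polar_e0_hvec i c : polar q e0 (hvec i c) = 0.
Proof. by rewrite polarDr // polarZr // he0e he0f mulr0 addr0. Qed.

Lemma polar_hvec_neq i j b c : i != j -> polar q (hvec i b) (hvec j c) = 0.
Proof.
move=> ij; rewrite polarDl // !polarDr // polarZl // !polarZr // polarZl //.
rewrite [polar q (f i) (e j)]polarC hee hff !hef (negbTE ij) eq_sym (negbTE ij).
by rewrite !mulr0 !addr0.
Qed.

Lemma iota_hvec_palindrome i a b c :
  iota (hvec i a) * iota (hvec i b) * iota (hvec i c) =
  iota (hvec i c) * iota (hvec i b) * iota (hvec i a).
Proof.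
by rewrite !linearD !linearZ; apply: sqr0_palindrome; rewrite iota_sqr ?quad_e ?quad_f scale0r.
Qed.

Lemma reversion_prod_hvec_pairs (l : 'I_m -> F) (r : seq 'I_m) :
  tau (\prod_(i <- r) (iota (hvec i 1) * iota (hvec i (l i)))) =
  \prod_(i <- r) (iota (hvec i (l i)) * iota (hvec i 1)).
Proof.
rewrite (reversion_prod tau_rev) prodr_rev_comm => [|i j ij].
  by apply: eq_bigr => i _; rewrite (reversionM tau_rev) !(reversion_iota tau_rev).
rewrite !(reversionM tau_rev) !(reversion_iota tau_rev).
by apply/commr_sym/commrM; apply/commr_sym/(iota_comm_pair iota_sqr); rewrite polar_hvec_neq.
Qed.

Definition spinor_vectors (b : 'I_m -> F) : seq V :=
  e0 :: [seq hvec j (b j) | j <- index_enum 'I_m].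

Lemma size_spinor_vectors b : size (spinor_vectors b) = m.+1.
Proof. by rewrite /= size_map [index_enum _]unlock -enumT size_enum_ord. Qed.

Lemma prod_quad_spinor_vectors b :
  \prod_(v <- spinor_vectors b) q v = q e0 * \prod_(j < m) b j.
Proof. by rewrite big_cons big_map; under eq_bigr do rewrite quad_hvec. Qed.

Lemma anisotropic_spinor_vectors b : q e0 != 0 -> (forall j, b j != 0) ->
  all (fun v => q v != 0) (spinor_vectors b).
Proof.
move=> qe0_neq0 b_neq0; rewrite /= qe0_neq0 all_map.
by apply/allP => j _ /=; rewrite quad_hvec.
Qed.

Lemma pairwise_orth_spinor_vectors b :
  pairwise (fun x y => polar q x y == 0) (spinor_vectors b).
Proof.
rewrite pairwise_cons all_map pairwise_map; apply/andP; split.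
  by apply/allP => j _; rewrite /= polar_e0_hvec.
have := index_enum_uniq 'I_m; rewrite uniq_pairwise; apply: sub_pairwise.
by move=> i j /= ij; rewrite polar_hvec_neq.
Qed.

Lemma spinor_intertwine b i c :
  \prod_(v <- spinor_vectors b) iota v * (iota (hvec i 1) * iota (hvec i c)) =
  iota (hvec i c) * iota (hvec i 1) * \prod_(v <- spinor_vectors b) iota v.
Proof.
have e0_comm d : GRing.comm (iota e0) (iota (hvec i d) * iota (hvec i 1)).
  exact: iota_comm_pair (polar_e0_hvec _ _) (polar_e0_hvec _ _).
rewrite big_cons big_map -mulrA.
rewrite (prodr_intertwine_at (i := i) (y := iota (hvec i c) * iota (hvec i 1)))
  ?index_enum_uniq ?mem_index_enum //.
- by rewrite [LHS]mulrA e0_comm mulrA.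
- by move=> j ji; split; apply: (iota_comm_pair iota_sqr); rewrite polar_hvec_neq.
- by rewrite !mulrA iota_hvec_palindrome.
Qed.

Lemma spinor_mul_pairs b (l : 'I_m -> F) (l0 : F) :
  \prod_(v <- spinor_vectors b) iota v *
    (l0 *: \prod_(i < m) (iota (hvec i 1) * iota (hvec i (l i)))) =
  tau (l0 *: \prod_(i < m) (iota (hvec i 1) * iota (hvec i (l i)))) *
    \prod_(v <- spinor_vectors b) iota v.
Proof.
rewrite (reversionZ tau_rev) reversion_prod_hvec_pairs -scalerAr -scalerAl.
by rewrite (prodr_intertwine _ (fun i => spinor_intertwine b i (l i))).
Qed.

End HyperbolicPairs.

Theorem corollary5p9
  (F : fieldType) (hperf : perfect_field F) (hchar : (2%:R : F) != 0)
  (V : vectType F) (q : V -> F) (hq : quadratic_form q) (hnd : qnondegenerate q)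
  (m : nat) (hm : odd m)
  (e0 : V) (e f : 'I_m -> V)
  (hbasis : basis_of fullv (e0 :: [seq e i | i <- enum 'I_m] ++ [seq f i | i <- enum 'I_m]))
  (he0 : q e0 != 0)
  (he0e : forall i, polar q e0 (e i) = 0) (he0f : forall i, polar q e0 (f i) = 0)
  (hef : forall i j, polar q (e i) (f j) = (i == j)%:R)
  (hee : forall i j, polar q (e i) (e j) = 0) (hff : forall i j, polar q (f i) (f j) = 0)
  (A : unitAlgType F) (iota : {linear V -> A}) (hA : is_clifford_algebra q iota)
  (tau : A -> A) (htau : is_reversion iota tau)
  (t : A)
  (ht : exists (l0 : F) (l : 'I_m -> F), l0 != 0 /\ (forall i, l i != 0) /\
          t = l0 *: \prod_(i < m) (iota (e i + f i) * iota (e i + l i *: f i))) :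
  exists s : A,
    [/\ clifford_group_even iota s,
        s * t * s^-1 = spin_norm tau t * t^-1,
        spin_norm tau s = 1
      & s ^+ 2 = (-1) ^+ ((m * m.+1)./2)].
Proof.
have [iota_sqr _] := hA.
have quad_hvec := quad_hvec hq hchar hef hee hff.
have [l0 [l [l0_neq0 [l_neq0 t_def]]]] := ht.
have {t_def} -> : t = l0 *: \prod_(i < m) (iota (hvec e f i 1) * iota (hvec e f i (l i))).
  by rewrite t_def; congr (_ *: _); apply: eq_bigr => i _; rewrite /hvec scale1r.
pose i0 : 'I_m := Ordinal (odd_gt0 hm).
pose b j := if j == i0 then (q e0)^-1 else 1.
have b_neq0 j : b j != 0 by rewrite /b; case: ifP; rewrite ?invr_eq0 ?oner_neq0.
pose ws := spinor_vectors e0 e f b.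
have ws_aniso := anisotropic_spinor_vectors hq hchar hef hee hff he0 b_neq0.
have ws_orth := pairwise_orth_spinor_vectors hq he0e he0f hef hee hff b.
have ws_size : size ws = m.+1 := size_spinor_vectors e0 e f b.
have ws_norm : \prod_(v <- ws) q v = 1.
  rewrite (prod_quad_spinor_vectors hq hchar e0 hef hee hff) (bigD1 i0) // big1 /=.
    by rewrite /b eqxx mulr1 mulfV.
  by move=> j /negbTE j_neq_i0; rewrite /b j_neq_i0.
have [s_unit _] := clifford_group_prod_iota iota_sqr ws_aniso.
have t_unit :
    l0 *: \prod_(i < m) (iota (hvec e f i 1) * iota (hvec e f i (l i))) \is a GRing.unit.
  rewrite scaler_unit ?unitfE //; apply: unitr_prod => i _.
  by rewrite unitrMl (iota_unit iota_sqr) ?quad_hvec ?oner_neq0.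
exists (\prod_(v <- ws) iota v); split.
- split; first exact: clifford_group_prod_iota.
  by apply: clifford_even_prod_iota; rewrite ws_size /= hm.
- by rewrite /spin_norm mulrK // (spinor_mul_pairs hq hchar iota_sqr htau) ?mulrK.
- by rewrite (spin_norm_prod_iota iota_sqr htau) ws_norm scale1r.
- by rewrite (sqr_prod_iota_orth iota_sqr htau) // ws_size bin2 mulnC.
Qed.
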